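(* Let $X$ be a random variable taking values in $\{0,1,2,\dots\}$ with finite mean, probability mass function $p_X$ and probability generating function $\Psi_X(t)=\mathrm{E}[t^X]$, $t\in[0,1]$, and suppose $X\in\Delta$. For $\mu>0$ set $D(t,\mu)=\Psi_X'(t)-\mu\Psi_X(t)$. For any natural number $k\ge 0$ let $f_k(\mu)=e^{-\mu}\left(1+\mu+\frac{\mu^2}{2!}+\dots+\frac{\mu^k}{k!}\right)$ and $$T^{(k)}=f_k(\mu)-p_X(0)\left(1+\mu+\dots+\frac{\mu^k}{k!}\right).$$ Then for any $\mu>0$ and any natural number $k$, $$\frac{1}{1+\mu+\dots+\frac{\mu^k}{k!}}\,|T^{(k)}|\le \int_0^1 |D(t,\mu)|\,dt\le e^{\mu}\,|T^{(k)}|.$$ In particular, for $k=0$, $$|e^{-\mu}-p_X(0)|\le \int_0^1|D(t,\mu)|\,dt\le e^{\mu}|e^{-\mu}-p_X(0)|.$$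
   Context: $\Delta$ denotes the class of distributions of random variables $X$ with values in $\{0,1,2,\dots\}$ (with finite mean) such that, for every $\mu>0$, the function $t\mapsto D(t,\mu)=\Psi_X'(t)-\mu\Psi_X(t)$ is either nonnegative for all $t\in[0,1]$ or nonpositive for all $t\in[0,1]$, where $\Psi_X(t)=\mathrm{E}[t^X]$ is the probability generating function and $\Psi_X'$ its derivative. *)

From Stdlib Require Import Reals.
From Coquelicot Require Import Coquelicot.
Open Scope R_scope.

Definition is_pmf_finite_mean (p : nat -> R) : Prop :=
  (forall n, 0 <= p n) /\ is_series p 1 /\ ex_series (fun n => INR n * p n).

Definition pgf (p : nat -> R) (t : R) : R := Series (fun n => p n * t ^ n).

(* Its derivative on [0,1] (one-sided at t = 1), written as the termwise
   differentiated power series  sum_n (n+1) p(n+1) t^n  (= E[X t^(X-1)]). *)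
Definition pgf' (p : nat -> R) (t : R) : R :=
  Series (fun n => INR (S n) * p (S n) * t ^ n).

Definition D_tmu (p : nat -> R) (t mu : R) : R := pgf' p t - mu * pgf p t.

Definition in_Delta (p : nat -> R) : Prop :=
  is_pmf_finite_mean p /\
  forall mu, 0 < mu ->
    (forall t, 0 <= t <= 1 -> 0 <= D_tmu p t mu) \/
    (forall t, 0 <= t <= 1 -> D_tmu p t mu <= 0).

Definition expsum (k : nat) (mu : R) : R :=
  sum_f_R0 (fun j => mu ^ j / INR (Factorial.fact j)) k.

Definition f_k (k : nat) (mu : R) : R := exp (- mu) * expsum k mu.

Definition T_k (p : nat -> R) (k : nat) (mu : R) : R :=
  f_k k mu - p 0%nat * expsum k mu.

From Stdlib Require Import Reals Lra Lia.
From Coquelicot Require Import Coquelicot.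
Open Scope R_scope.

(* Since [d/dt (e^(-mu t) Psi(t)) = e^(-mu t) D(t, mu)], integrating over [0, 1]
   gives [int_0^1 e^(-mu t) D(t, mu) dt = e^(-mu) - p(0)], and [T^(k)] is this
   number times [1 + mu + ... + mu^k/k!].  As [D(., mu)] has constant sign on
   [0, 1] and [e^(-mu) <= e^(-mu t) <= 1] there, the weighted integral lies
   between [e^(-mu) int |D|] and [int |D|] in absolute value.  The series
   [Psi] and [Psi'] are handled through their partial sums, which converge
   uniformly on [0, 1] because the coefficients are nonnegative and summable. *)

Lemma pow_unit_interval (t : R) (n : nat) : 0 <= t <= 1 -> 0 <= t ^ n <= 1.
Proof.
  intros Ht. induction n as [|n IH]; simpl; [lra|].
  split; [apply Rmult_le_pos|]; nra.
Qed.

Lemma exp_le (x y : R) : x <= y -> exp x <= exp y.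
Proof.
  intros [Hlt | ->]; [left; apply exp_increasing, Hlt | apply Rle_refl].
Qed.

Lemma is_lim_seq_sum_f_R0 (a : nat -> R) (l : R) :
  is_series a l -> is_lim_seq (sum_f_R0 a) l.
Proof.
  intros Ha. apply (is_lim_seq_ext (sum_n a)); [|exact Ha].
  intros n. apply sum_n_Reals.
Qed.

Lemma is_lim_seq_Series_tail (a : nat -> R) :
  ex_series a -> is_lim_seq (fun N => Series a - sum_f_R0 a N) 0.
Proof.
  intros Ha.
  assert (Hlim := is_lim_seq_minus' _ _ _ _ (is_lim_seq_const (Series a))
                    (is_lim_seq_sum_f_R0 a _ (Series_correct a Ha))).
  now rewrite Rminus_diag in Hlim.
Qed.

Lemma Rabs_Series_tail_le (u c : nat -> R) (N : nat) :
  ex_series c -> (forall n, Rabs (u n) <= c n) ->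
  Rabs (Series u - sum_f_R0 u N) <= Series c - sum_f_R0 c N.
Proof.
  intros Hc Hu.
  assert (Hu_ex : ex_series u) by exact (ex_series_le u c Hu Hc).
  assert (Hc_tail : ex_series (fun k => c (S N + k)%nat))
    by (apply ex_series_incr_n; exact Hc).
  rewrite (Series_incr_n u (S N)), (Series_incr_n c (S N)) by (lia || assumption).
  simpl Init.Nat.pred.
  replace (sum_f_R0 u N + Series (fun k => u (S N + k)%nat) - sum_f_R0 u N)
    with (Series (fun k => u (S N + k)%nat)) by ring.
  replace (sum_f_R0 c N + Series (fun k => c (S N + k)%nat) - sum_f_R0 c N)
    with (Series (fun k => c (S N + k)%nat)) by ring.
  assert (Habs_ex : ex_series (fun k => Rabs (u (S N + k)%nat))).
  { apply (@ex_series_le R_AbsRing R_CompleteNormedModule _ (fun k => c (S N + k)%nat)); [|exact Hc_tail].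
    intros n. change (Rabs (Rabs (u (S N + n)%nat)) <= c (S N + n)%nat).
    rewrite Rabs_Rabsolu. apply Hu. }
  eapply Rle_trans; [apply Series_Rabs, Habs_ex|].
  apply Series_le; [|exact Hc_tail].
  intros n. split; [apply Rabs_pos | apply Hu].
Qed.

Lemma Series_pow_tail_le (a : nat -> R) (t : R) (N : nat) :
  (forall n, 0 <= a n) -> ex_series a -> 0 <= t <= 1 ->
  Rabs (Series (fun n => a n * t ^ n) - sum_f_R0 (fun n => a n * t ^ n) N)
    <= Series a - sum_f_R0 a N.
Proof.
  intros Ha0 Ha Ht. apply Rabs_Series_tail_le; [exact Ha|].
  intros n. destruct (pow_unit_interval t n Ht). specialize (Ha0 n).
  rewrite Rabs_mult, Rabs_pos_eq, (Rabs_pos_eq (t ^ n)) by assumption. nra.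
Qed.

Lemma sum_pow_at0 (a : nat -> R) (N : nat) :
  sum_f_R0 (fun n => a n * 0 ^ n) N = a 0%nat.
Proof.
  induction N as [|N IH]; simpl; [ring|].
  rewrite IH. ring.
Qed.

Lemma ex_derive_sum_pow (a : nat -> R) (N : nat) (t : R) :
  ex_derive (fun t => sum_f_R0 (fun n => a n * t ^ n) N) t.
Proof.
  induction N as [|N IH]; simpl.
  - auto_derive; auto.
  - apply (ex_derive_plus (fun t => sum_f_R0 (fun n => a n * t ^ n) N)
                          (fun t => a (S N) * (t * t ^ N))); [exact IH|].
    auto_derive; auto.
Qed.

Lemma is_derive_sum_pow (a : nat -> R) (N : nat) (t : R) :
  is_derive (fun t => sum_f_R0 (fun n => a n * t ^ n) (S N)) t
    (sum_f_R0 (fun n => INR (S n) * a (S n) * t ^ n) N).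
Proof.
  induction N as [|N IH].
  - simpl. auto_derive; auto. ring.
  - apply (is_derive_plus (fun t => sum_f_R0 (fun n => a n * t ^ n) (S N))
                          (fun t => a (S (S N)) * t ^ (S (S N)))); [exact IH|].
    auto_derive; auto. simpl. ring.
Qed.

(* Coquelicot only integrates limits that are uniform on all of [R], so the
   functions are first composed with the retraction of [R] onto [[a, b]]. *)
Lemma is_RInt_uniform_limit (f : nat -> R -> R) (g : R -> R) (eps I : nat -> R)
    (a b : R) :
  a <= b ->
  (forall N t, a <= t <= b -> Rabs (f N t - g t) <= eps N) ->
  is_lim_seq eps 0 ->
  (forall N, is_RInt (f N) a b (I N)) ->
  exists l : R, is_lim_seq I l /\ is_RInt g a b l.
Proof.
  intros Hab Hfg Heps HI.
  set (r := fun t => Rmax a (Rmin b t)).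
  assert (Hr_in : forall t, a <= r t <= b).
  { intros t. unfold r. split; [apply Rmax_l|].
    apply Rmax_lub; [exact Hab | apply Rmin_l]. }
  assert (Hr_id : forall t, Rmin a b < t < Rmax a b -> r t = t).
  { intros t. rewrite Rmin_left, Rmax_right by exact Hab. intros Ht.
    unfold r. rewrite Rmin_right, Rmax_right by lra. reflexivity. }
  destruct (filterlim_RInt (fun N t => f N (r t)) a b eventually eventually_filter
              (fun t => g (r t)) I) as [l [Hl Hgl]].
  - intros N. apply (is_RInt_ext (f N)); [|apply HI].
    intros t Ht. now rewrite Hr_id.
  - intros P [e HP]. destruct (proj2 (is_lim_seq_spec eps 0) Heps e) as [N0 HN0].
    exists N0. intros N HN. apply HP. intros t.
    change (Rabs (f N (r t) - g (r t)) < e).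
    specialize (HN0 N HN). rewrite Rminus_0_r in HN0.
    eapply Rle_lt_trans; [apply Hfg, Hr_in|].
    eapply Rle_lt_trans; [apply Rle_abs | exact HN0].
  - exists l. split; [exact Hl|].
    apply (is_RInt_ext (fun t => g (r t))); [|exact Hgl].
    intros t Ht. now rewrite Hr_id.
Qed.

Section PartialSums.

Variables (p : nat -> R) (mu : R).
Hypothesis p_ge0 : forall n, 0 <= p n.
Hypothesis p_sum1 : is_series p 1.
Hypothesis mean_finite : ex_series (fun n => INR n * p n).
Hypothesis mu_ge0 : 0 <= mu.

Definition pgf_partial (N : nat) (t : R) : R :=
  sum_f_R0 (fun n => p n * t ^ n) (S N).

Definition D_partial (N : nat) (t : R) : R :=
  sum_f_R0 (fun n => INR (S n) * p (S n) * t ^ n) N - mu * pgf_partial N t.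

Let b (n : nat) : R := INR (S n) * p (S n).

Lemma ex_series_b : ex_series b.
Proof. exact (proj1 (ex_series_incr_1 (fun n => INR n * p n)) mean_finite). Qed.

Definition D_partial_err (N : nat) : R :=
  (Series b - sum_f_R0 b N) + mu * (1 - sum_f_R0 p (S N)).

Lemma D_partial_uniform (N : nat) (t : R) : 0 <= t <= 1 ->
  Rabs (D_partial N t - D_tmu p t mu) <= D_partial_err N.
Proof.
  intros Ht.
  assert (b_ge0 : forall n, 0 <= b n)
    by (intros n; apply Rmult_le_pos; [apply pos_INR | apply p_ge0]).
  assert (Hb := Series_pow_tail_le b t N b_ge0 ex_series_b Ht).
  assert (Hp := Series_pow_tail_le p t (S N) p_ge0 (ex_intro _ 1 p_sum1) Ht).
  rewrite (is_series_unique p 1 p_sum1) in Hp.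
  unfold D_partial, D_partial_err, pgf_partial, D_tmu, pgf', pgf.
  fold b. change (fun n => INR (S n) * p (S n) * t ^ n) with (fun n => b n * t ^ n).
  set (eb := Series (fun n => b n * t ^ n) - sum_f_R0 (fun n => b n * t ^ n) N) in *.
  set (ep := Series (fun n => p n * t ^ n) - sum_f_R0 (fun n => p n * t ^ n) (S N)) in *.
  replace (_ - _ - _) with (- eb + mu * ep) by (unfold eb, ep; ring).
  eapply Rle_trans; [apply Rabs_triang|].
  rewrite Rabs_Ropp, Rabs_mult, (Rabs_pos_eq mu) by exact mu_ge0.
  apply Rplus_le_compat; [exact Hb | apply Rmult_le_compat_l; assumption].
Qed.

Lemma D_partial_err_lim : is_lim_seq D_partial_err 0.
Proof.
  assert (Hp_tail := is_lim_seq_Series_tail p (ex_intro _ 1 p_sum1)).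
  rewrite (is_series_unique p 1 p_sum1) in Hp_tail.
  apply is_lim_seq_incr_1 in Hp_tail.
  assert (Hlim := is_lim_seq_plus' _ _ _ _ (is_lim_seq_Series_tail b ex_series_b)
                    (is_lim_seq_scal_l _ mu _ Hp_tail)).
  now rewrite Rmult_0_r, Rplus_0_r in Hlim.
Qed.

Lemma ex_derive_D_partial (N : nat) (t : R) : ex_derive (D_partial N) t.
Proof.
  apply (ex_derive_minus (fun t => sum_f_R0 (fun n => INR (S n) * p (S n) * t ^ n) N)
                         (fun t => mu * pgf_partial N t)).
  - apply ex_derive_sum_pow.
  - apply ex_derive_scal, ex_derive_sum_pow.
Qed.

Lemma ex_RInt_D_tmu : ex_RInt (fun t => D_tmu p t mu) 0 1.
Proof.
  destruct (is_RInt_uniform_limit D_partial (fun t => D_tmu p t mu) D_partial_err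
              (fun N => RInt (D_partial N) 0 1) 0 1 Rle_0_1 D_partial_uniform
              D_partial_err_lim) as [l [_ Hl]].
  - intros N. apply (@RInt_correct R_CompleteNormedModule).
    apply (@ex_RInt_continuous R_CompleteNormedModule).
    intros t _. apply (@ex_derive_continuous R_AbsRing R_NormedModule), ex_derive_D_partial.
  - exists l. exact Hl.
Qed.

Lemma is_RInt_exp_D_partial (N : nat) :
  is_RInt (fun t => exp (- mu * t) * D_partial N t) 0 1
    (exp (- mu) * sum_f_R0 p (S N) - p 0%nat).
Proof.
  set (F := fun t => exp (- mu * t) * pgf_partial N t).
  assert (HF : forall t, is_derive F t (exp (- mu * t) * D_partial N t)).
  { intros t.
    assert (He : is_derive (fun t => exp (- mu * t)) t (- mu * exp (- mu * t)))
      by (auto_derive; auto; ring).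
    replace (exp (- mu * t) * D_partial N t) with
      (plus (mult (- mu * exp (- mu * t)) (pgf_partial N t))
            (mult (exp (- mu * t)) (sum_f_R0 (fun n => INR (S n) * p (S n) * t ^ n) N)))
      by (unfold D_partial, plus, mult; simpl; ring).
    exact (is_derive_mult _ _ t _ _ He (is_derive_sum_pow p N t) (fun x y => Rmult_comm x y)). }
  replace (exp (- mu) * sum_f_R0 p (S N) - p 0%nat) with (minus (F 1) (F 0)).
  - apply (@is_RInt_derive R_CompleteNormedModule); [intros t _; apply HF|].
    intros t _. apply (@ex_derive_continuous R_AbsRing R_NormedModule).
    apply ex_derive_mult; [auto_derive; auto | apply ex_derive_D_partial].
  - unfold F, pgf_partial. cbv beta.
    rewrite Rmult_1_r, Rmult_0_r, exp_0, sum_pow_at0.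
    rewrite (sum_eq _ p) by (intros n _; rewrite pow1; ring).
    unfold minus, plus, opp; simpl. ring.
Qed.

Lemma is_RInt_exp_D_tmu :
  is_RInt (fun t => exp (- mu * t) * D_tmu p t mu) 0 1 (exp (- mu) - p 0%nat).
Proof.
  destruct (is_RInt_uniform_limit (fun N t => exp (- mu * t) * D_partial N t)
              (fun t => exp (- mu * t) * D_tmu p t mu) D_partial_err
              (fun N => exp (- mu) * sum_f_R0 p (S N) - p 0%nat) 0 1 Rle_0_1)
    as [l [Hl HRInt]].
  - intros N t Ht.
    assert (Hexp : exp (- mu * t) <= 1) by (rewrite <- exp_0; apply exp_le; nra).
    rewrite <- Rmult_minus_distr_l, Rabs_mult, (Rabs_pos_eq (exp _))
      by (left; apply exp_pos).
    apply (Rle_trans _ (1 * Rabs (D_partial N t - D_tmu p t mu))).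
    + apply Rmult_le_compat_r; [apply Rabs_pos | exact Hexp].
    + rewrite Rmult_1_l. apply D_partial_uniform, Ht.
  - exact D_partial_err_lim.
  - exact is_RInt_exp_D_partial.
  - assert (Hsum := is_lim_seq_sum_f_R0 p 1 p_sum1).
    apply is_lim_seq_incr_1 in Hsum.
    assert (Hlim := is_lim_seq_minus' _ _ _ _ (is_lim_seq_scal_l _ (exp (- mu)) _ Hsum)
                      (is_lim_seq_const (p 0%nat))).
    rewrite Rmult_1_r in Hlim.
    apply is_lim_seq_unique in Hl, Hlim. rewrite Hl in Hlim.
    injection Hlim as ->. exact HRInt.
Qed.

End PartialSums.

Lemma RInt_abs_bounds_of_nonneg (D : R -> R) (mu J : R) :
  0 <= mu -> (forall t, 0 <= t <= 1 -> 0 <= D t) -> ex_RInt D 0 1 ->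
  is_RInt (fun t => exp (- mu * t) * D t) 0 1 J ->
  exp (- mu) * RInt (fun t => Rabs (D t)) 0 1 <= Rabs J <= RInt (fun t => Rabs (D t)) 0 1.
Proof.
  intros Hmu HD [I HI] HJ.
  assert (Habs : RInt (fun t => Rabs (D t)) 0 1 = I).
  { apply is_RInt_unique, (is_RInt_ext D); [|exact HI].
    rewrite Rmin_left, Rmax_right by lra.
    intros t Ht. symmetry. apply Rabs_pos_eq, HD. lra. }
  assert (HI0 : 0 <= I) by (apply (is_RInt_ge_0 D 0 1); [lra | exact HI |]; intros; apply HD; lra).
  assert (Hlow : exp (- mu) * I <= J).
  { apply (is_RInt_le (fun t => exp (- mu) * D t) (fun t => exp (- mu * t) * D t) 0 1);
      [lra | | exact HJ |].
    - exact (is_RInt_scal D 0 1 (exp (- mu)) I HI).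
    - intros t Ht. apply Rmult_le_compat_r; [apply HD; lra | apply exp_le; nra]. }
  assert (Hup : J <= I).
  { apply (is_RInt_le (fun t => exp (- mu * t) * D t) D 0 1 J I);
      [lra | exact HJ | exact HI |].
    intros t Ht. assert (exp (- mu * t) <= 1) by (rewrite <- exp_0; apply exp_le; nra).
    assert (0 <= D t) by (apply HD; lra). nra. }
  assert (0 < exp (- mu)) by apply exp_pos.
  rewrite Habs, Rabs_pos_eq by nra. lra.
Qed.

Lemma RInt_abs_bounds_of_constant_sign (D : R -> R) (mu J : R) :
  0 <= mu ->
  (forall t, 0 <= t <= 1 -> 0 <= D t) \/ (forall t, 0 <= t <= 1 -> D t <= 0) ->
  ex_RInt D 0 1 -> is_RInt (fun t => exp (- mu * t) * D t) 0 1 J ->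
  exp (- mu) * RInt (fun t => Rabs (D t)) 0 1 <= Rabs J <= RInt (fun t => Rabs (D t)) 0 1.
Proof.
  intros Hmu [Hpos | Hneg] HD HJ; [exact (RInt_abs_bounds_of_nonneg D mu J Hmu Hpos HD HJ)|].
  assert (Habs : RInt (fun t => Rabs (- D t)) 0 1 = RInt (fun t => Rabs (D t)) 0 1)
    by (apply RInt_ext; intros; apply Rabs_Ropp).
  rewrite <- Habs, <- (Rabs_Ropp J).
  apply (RInt_abs_bounds_of_nonneg (fun t => - D t)); [exact Hmu | | |].
  - intros t Ht. specialize (Hneg t Ht). lra.
  - exact (ex_RInt_opp D 0 1 HD).
  - apply (is_RInt_ext (fun t => opp (exp (- mu * t) * D t))); [|exact (is_RInt_opp _ 0 1 J HJ)].
    intros t _. unfold opp; simpl. ring.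
Qed.

Lemma expsum_ge1 (k : nat) (mu : R) : 0 <= mu -> 1 <= expsum k mu.
Proof.
  intros Hmu. unfold expsum. induction k as [|k IH]; [simpl; lra|].
  rewrite tech5.
  assert (0 <= mu ^ S k / INR (Factorial.fact (S k))).
  { apply Rmult_le_pos; [apply pow_le, Hmu|].
    left. apply Rinv_0_lt_compat, INR_fact_lt_0. }
  lra.
Qed.

Theorem proposition1 (p : nat -> R) :
  is_pmf_finite_mean p -> in_Delta p ->
  forall (mu : R) (k : nat), 0 < mu ->
    / expsum k mu * Rabs (T_k p k mu) <= RInt (fun t => Rabs (D_tmu p t mu)) 0 1 /\
    RInt (fun t => Rabs (D_tmu p t mu)) 0 1 <= exp mu * Rabs (T_k p k mu).
Proof.
  intros [p_ge0 [p_sum1 mean_finite]] [_ Hsign] mu k Hmu.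
  assert (mu_ge0 : 0 <= mu) by lra.
  destruct (RInt_abs_bounds_of_constant_sign (fun t => D_tmu p t mu) mu (exp (- mu) - p 0%nat)
              mu_ge0 (Hsign mu Hmu) (ex_RInt_D_tmu p mu p_ge0 p_sum1 mean_finite mu_ge0)
              (is_RInt_exp_D_tmu p mu p_ge0 p_sum1 mean_finite mu_ge0))
    as [Hlow Hup].
  set (E := expsum k mu). set (I := RInt (fun t => Rabs (D_tmu p t mu)) 0 1) in *.
  assert (HE : 1 <= E) by exact (expsum_ge1 k mu mu_ge0).
  assert (HT : T_k p k mu = E * (exp (- mu) - p 0%nat)) by (unfold T_k, f_k; fold E; ring).
  assert (Hexp : exp mu * exp (- mu) = 1) by (rewrite <- exp_plus, Rplus_opp_r; apply exp_0).
  assert (0 < exp mu) by apply exp_pos.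
  rewrite HT, Rabs_mult, (Rabs_pos_eq E) by lra.
  split.
  - rewrite <- Rmult_assoc, Rinv_l by lra. lra.
  - assert (I <= exp mu * Rabs (exp (- mu) - p 0%nat)).
    { rewrite <- (Rmult_1_l I), <- Hexp, Rmult_assoc.
      apply Rmult_le_compat_l; lra. }
    assert (0 <= Rabs (exp (- mu) - p 0%nat)) by apply Rabs_pos.
    nra.
Qed.
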